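(* Let $b_n = 3n^2+3n+1$ for $n \ge 0$ and $a_n = -(2n^4-n^3)$ for $n \ge 1$. Define sequences $\{A_n\}_{n\ge -1}$ and $\{B_n\}_{n\ge -1}$ by $A_{-1}=1$, $A_0=b_0$, $B_{-1}=0$, $B_0=1$, and for $n\ge 1$, $$A_n = b_n A_{n-1} + a_n A_{n-2},\qquad B_n = b_n B_{n-1} + a_n B_{n-2}.$$ Then $B_n \neq 0$ for all $n \ge 0$, and the generalized continued fraction $$b_0 + \cfrac{a_1}{b_1 + \cfrac{a_2}{b_2 + \cdots}} \;=\; 1 - \cfrac{2\cdot 1^4 - 1^3}{7 - \cfrac{2\cdot 2^4 - 2^3}{19 - \cfrac{2\cdot 3^4-3^3}{37 - \cdots}}}$$ converges to $\dfrac{8}{\pi^2}$, i.e. $\displaystyle\lim_{n\to\infty} \frac{A_n}{B_n} = \frac{8}{\pi^2}$.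
   Context: The value of a generalized continued fraction $b_0 + \cfrac{a_1}{b_1 + \cfrac{a_2}{b_2+\cdots}}$ is defined as the limit of its convergents $A_n/B_n$, where $A_n, B_n$ are the numerator and denominator sequences given by the recurrences above. Although placed in a conjecture environment, this identity is the paper's main result, which it proves. *)

From Stdlib Require Import Reals.
From Coquelicot Require Import Coquelicot.
Open Scope R_scope.

Definition cf_b (n : nat) : R := 3 * (INR n)^2 + 3 * INR n + 1.
Definition cf_a (n : nat) : R := - (2 * (INR n)^4 - (INR n)^3).

(* cf_pair x_m1 x_0 n = (X_{n-1}, X_n) for the recurrence
   X_n = b_n X_{n-1} + a_n X_{n-2} (n >= 1), with X_{-1} = x_m1, X_0 = x_0. *)
Fixpoint cf_pair (x_m1 x_0 : R) (n : nat) : R * R :=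
  match n with
  | O => (x_m1, x_0)
  | S k => let (p, q) := cf_pair x_m1 x_0 k in
           (q, cf_b (S k) * q + cf_a (S k) * p)
  end.

Definition cf_A (n : nat) : R := snd (cf_pair 1 (cf_b 0) n).
Definition cf_B (n : nat) : R := snd (cf_pair 0 1 n).

From Stdlib Require Import Reals Lra Lia.
From Coquelicot Require Import Coquelicot.
Open Scope R_scope.

(* Besides A and B, the recurrence is also solved by P_n = n! (2n-1)!!, shifted so
   that A_n = P_{n+1}.  Writing B_n = P_{n+1} S_n turns the recurrence into a
   first-order one for the increments w_k of S, whose solution is
   w_k = k! / ((k+1) (2k+1)!!); hence A_n / B_n = 1 / (w_0 + ... + w_n).
   These w_k are twice the terms of arcsin(y)^2 = 1/2 sum_{k>=1} (2y)^(2k) / (k^2 C(2k,k))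
   at y = sin(pi/4), so the partial sums tend to 2 (pi/4)^2 = pi^2/8.  The series is
   controlled through its truncations F_n(x) at y = sin x: their second derivatives
   telescope to F_n'' = 2 - 2 (2n)!!/(2n-1)!! sin^(2n) x, so by a second-order Taylor
   bound 0 <= x^2 - F_n(x) <= (2n)!!/(2n-1)!! 2^(-n) x^2 on [0, pi/4], and the right
   side decays geometrically. *)

Fixpoint partial_sum (u : nat -> R) (n : nat) : R :=
  match n with
  | O => 0
  | S k => partial_sum u k + u k
  end.

Lemma partial_sum_telescope (v : nat -> R) (n : nat) :
  partial_sum (fun k => v k - v (S k)) n = v O - v n.
Proof. induction n as [|n IH]; simpl; [ring | rewrite IH; ring]. Qed.

Lemma partial_sum_scal (c : R) (u : nat -> R) (n : nat) :
  partial_sum (fun k => c * u k) n = c * partial_sum u n.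
Proof. induction n as [|n IH]; simpl; [ring | rewrite IH; ring]. Qed.

Lemma partial_sum_eq0 (u : nat -> R) (n : nat) :
  (forall k, u k = 0) -> partial_sum u n = 0.
Proof. intros Hu; induction n as [|n IH]; simpl; [ring | rewrite IH, Hu; ring]. Qed.

Lemma partial_sum_pos (u : nat -> R) (n : nat) :
  (forall k, 0 < u k) -> 0 < partial_sum u (S n).
Proof.
  intros Hu; induction n as [|n IH]; simpl in *.
  - specialize (Hu O); lra.
  - specialize (Hu (S n)); lra.
Qed.

Lemma is_derive_partial_sum (u : nat -> R -> R) (du : nat -> R) (x : R) (n : nat) :
  (forall k, is_derive (u k) x (du k)) ->
  is_derive (fun y => partial_sum (fun k => u k y) n) x (partial_sum du n).
Proof.
  intros Hu; induction n as [|n IH]; simpl.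
  - apply (is_derive_const (K := R_AbsRing) (V := R_NormedModule) 0 x).
  - apply (is_derive_plus (K := R_AbsRing) (V := R_NormedModule)
             (fun y => partial_sum (fun k => u k y) n) (u n)); auto.
Qed.

Section ThreeTermRecurrence.

Variables a b : nat -> R.

Definition solves_recurrence (X : nat -> R) : Prop :=
  forall k, X (S (S k)) = b k * X (S k) + a k * X k.

Lemma solves_recurrence_mul_partial_sum (P w : nat -> R) :
  solves_recurrence P ->
  (forall k, w (S k) * P (S (S k)) = - a k * w k * P k) ->
  solves_recurrence (fun n => P n * partial_sum w n).
Proof.
  intros HP Hw k; simpl.
  rewrite Rmult_plus_distr_l, (Rmult_comm (P (S (S k))) (w (S k))), Hw, (HP k); ring.
Qed.

End ThreeTermRecurrence.

(* [X k] plays the role of X_{k-1}, matching [cf_pair], which starts at X_{-1}. *)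
Definition cf_recurrence : (nat -> R) -> Prop :=
  solves_recurrence (fun k => cf_a (S k)) (fun k => cf_b (S k)).

Lemma cf_pair_solution (X : nat -> R) :
  cf_recurrence X -> forall n, cf_pair (X O) (X 1%nat) n = (X n, X (S n)).
Proof.
  intros HX n; induction n as [|n IH]; [reflexivity|].
  simpl; rewrite IH, HX; reflexivity.
Qed.

(* [fact_oddfact n = n! (2n-1)!!]; the factor for k = 0 is 1, so A_{-1} = A_0. *)
Fixpoint fact_oddfact (n : nat) : R :=
  match n with
  | O => 1
  | S k => fact_oddfact k * (INR k + 1) * (2 * INR k + 1)
  end.

Lemma fact_oddfact_pos (n : nat) : 0 < fact_oddfact n.
Proof.
  induction n as [|n IH]; simpl; [lra|].
  pose proof (pos_INR n).
  apply Rmult_lt_0_compat; [apply Rmult_lt_0_compat|]; lra.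
Qed.

Lemma cf_recurrence_fact_oddfact : cf_recurrence fact_oddfact.
Proof. intros k; cbn [fact_oddfact]; unfold cf_a, cf_b; rewrite !S_INR; ring. Qed.

Lemma cf_A_fact_oddfact (n : nat) : cf_A n = fact_oddfact (S n).
Proof.
  unfold cf_A.
  replace (cf_pair 1 (cf_b 0) n) with (cf_pair (fact_oddfact O) (fact_oddfact 1%nat) n)
    by (unfold cf_b; simpl; f_equal; ring).
  rewrite (cf_pair_solution _ cf_recurrence_fact_oddfact); reflexivity.
Qed.

Lemma cf_B_fact_oddfact (w : nat -> R) :
  w O = 1 ->
  (forall k, (INR k + 2) * (2 * INR k + 3) * w (S k) = (INR k + 1) ^ 2 * w k) ->
  forall n, cf_B n = fact_oddfact (S n) * partial_sum w (S n).
Proof.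
  intros Hw0 Hw n.
  set (X := fun m => fact_oddfact m * partial_sum w m).
  assert (HX : cf_recurrence X).
  { apply solves_recurrence_mul_partial_sum; [apply cf_recurrence_fact_oddfact|].
    intros k; cbn [fact_oddfact]; unfold cf_a; rewrite !S_INR.
    transitivity ((INR k + 2) * (2 * INR k + 3) * w (S k)
                  * (fact_oddfact k * (INR k + 1) * (2 * INR k + 1))); [ring|].
    rewrite Hw; ring. }
  unfold cf_B.
  replace (cf_pair 0 1 n) with (cf_pair (X O) (X 1%nat) n)
    by (unfold X; simpl; rewrite Hw0; f_equal; ring).
  rewrite (cf_pair_solution _ HX); reflexivity.
Qed.

Lemma nonneg_of_is_derive_nonneg (f f' : R -> R) (b : R) :
  0 <= b -> (forall x, is_derive f x (f' x)) -> f 0 = 0 ->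
  (forall x, 0 <= x <= b -> 0 <= f' x) -> 0 <= f b.
Proof.
  intros Hb Hf Hf0 Hf'.
  destruct (MVT_gen f 0 b f') as [c [Hc Hmvt]].
  - intros x _; apply Hf.
  - intros x _; apply continuity_pt_filterlim, (ex_derive_continuous (V := R_NormedModule)).
    eexists; apply Hf.
  - rewrite Rmin_left, Rmax_right in Hc by lra.
    rewrite Hf0, !Rminus_0_r in Hmvt; rewrite Hmvt.
    apply Rmult_le_pos; [apply Hf'|]; lra.
Qed.

Lemma nonneg_of_is_derive2_nonneg (f f' f'' : R -> R) (b : R) :
  0 <= b -> (forall x, is_derive f x (f' x)) -> (forall x, is_derive f' x (f'' x)) ->
  f 0 = 0 -> f' 0 = 0 -> (forall x, 0 <= x <= b -> 0 <= f'' x) -> 0 <= f b.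
Proof.
  intros Hb Hf Hf' Hf0 Hf'0 Hf''.
  apply (nonneg_of_is_derive_nonneg f f'); auto.
  intros x Hx; apply (nonneg_of_is_derive_nonneg f' f''); [lra | auto | auto |].
  intros y Hy; apply Hf''; lra.
Qed.

Lemma taylor2_bound (f f' f'' : R -> R) (M b : R) :
  0 <= b -> (forall x, is_derive f x (f' x)) -> (forall x, is_derive f' x (f'' x)) ->
  f 0 = 0 -> f' 0 = 0 -> (forall x, 0 <= x <= b -> 0 <= f'' x <= M) ->
  0 <= f b <= M * b ^ 2 / 2.
Proof.
  intros Hb Hf Hf' Hf0 Hf'0 Hf''.
  split.
  - apply (nonneg_of_is_derive2_nonneg f f' f''); auto.
    intros x Hx; apply Hf''; auto.
  - enough (0 <= M * b ^ 2 / 2 - f b) by lra.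
    apply (nonneg_of_is_derive2_nonneg (fun x => M * x ^ 2 / 2 - f x)
             (fun x => M * x - f' x) (fun x => M - f'' x)); auto.
    + intros x; apply (is_derive_minus (K := R_AbsRing) (V := R_NormedModule)); [|apply Hf].
      auto_derive; [auto | field].
    + intros x; apply (is_derive_minus (K := R_AbsRing) (V := R_NormedModule)); [|apply Hf'].
      auto_derive; [auto | ring].
    + cbv beta; rewrite Hf0; field.
    + cbv beta; rewrite Hf'0; ring.
    + intros x Hx; specialize (Hf'' x Hx); lra.
Qed.

Lemma sin_PI4_pow_even (n : nat) : sin (PI / 4) ^ (2 * n) = (1 / 2) ^ n.
Proof.
  rewrite pow_mult; f_equal.
  assert (Hsqrt : sqrt 2 * sqrt 2 = 2) by (apply sqrt_sqrt; lra).
  assert (sqrt 2 <> 0) by (apply Rgt_not_eq, sqrt_lt_R0; lra).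
  replace (1 / 2) with (1 / (sqrt 2 * sqrt 2)) by (rewrite Hsqrt; reflexivity).
  rewrite sin_PI4; simpl; field; auto.
Qed.

Lemma sin_sq_le_half (x : R) : 0 <= x <= PI / 4 -> 0 <= sin x ^ 2 <= 1 / 2.
Proof.
  intros Hx; pose proof PI_RGT_0.
  assert (0 <= sin x) by (apply sin_ge_0; lra).
  assert (sin x <= sin (PI / 4)) by (apply sin_incr_1; lra).
  rewrite <- (pow_1 (1 / 2)), <- (sin_PI4_pow_even 1).
  split; [apply pow_le | apply pow_incr]; lra.
Qed.

(* [dfact_ratio n = (2n)!! / (2n-1)!!] *)
Fixpoint dfact_ratio (n : nat) : R :=
  match n with
  | O => 1
  | S k => dfact_ratio k * (2 * INR k + 2) / (2 * INR k + 1)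
  end.

Lemma dfact_ratio_pos (n : nat) : 0 < dfact_ratio n.
Proof.
  induction n as [|n IH]; simpl; [lra|].
  pose proof (pos_INR n).
  apply Rdiv_lt_0_compat; [apply Rmult_lt_0_compat|]; lra.
Qed.

Lemma dfact_ratio_half_pow_le (n : nat) : dfact_ratio (S n) * (1 / 2) ^ S n <= (2 / 3) ^ n.
Proof.
  induction n as [|n IH]; [simpl; lra|].
  pose proof (pos_INR n).
  assert (Hratio : (INR n + 2) / (2 * INR n + 3) <= 2 / 3).
  { apply Rmult_le_reg_r with (2 * INR n + 3); [lra|].
    unfold Rdiv; rewrite Rmult_assoc, Rinv_l; lra. }
  replace (dfact_ratio (S (S n)) * (1 / 2) ^ S (S n))
    with (dfact_ratio (S n) * (1 / 2) ^ S n * ((INR n + 2) / (2 * INR n + 3)))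
    by (cbn [dfact_ratio pow]; rewrite S_INR; field; lra).
  pose proof (dfact_ratio_pos (S n)); pose proof (pow_le (1 / 2) (S n) ltac:(lra)).
  rewrite <- (tech_pow_Rmult (2 / 3)), (Rmult_comm (2 / 3)).
  apply Rmult_le_compat; [nra | apply Rlt_le, Rdiv_lt_0_compat; lra | exact IH | exact Hratio].
Qed.

(* The (k+1)-st term of arcsin(y)^2 = sum_{k>=1} (2k)!!/(2k-1)!! y^(2k) / (2k^2) at y = sin x. *)
Definition asin_sq_term (k : nat) (x : R) : R :=
  dfact_ratio (S k) / (2 * (INR k + 1) ^ 2) * sin x ^ (2 * S k).

Definition asin_sq_term' (k : nat) (x : R) : R :=
  dfact_ratio (S k) / (INR k + 1) * (sin x ^ S (2 * k) * cos x).

Lemma is_derive_asin_sq_term (k : nat) (x : R) :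
  is_derive (asin_sq_term k) x (asin_sq_term' k x).
Proof.
  pose proof (pos_INR k).
  unfold asin_sq_term, asin_sq_term'.
  replace (dfact_ratio (S k) / (INR k + 1) * (sin x ^ S (2 * k) * cos x))
    with (dfact_ratio (S k) / (2 * (INR k + 1) ^ 2)
          * (INR (2 * S k) * cos x * sin x ^ pred (2 * S k))).
  - apply is_derive_scal, is_derive_pow, is_derive_sin.
  - replace (pred (2 * S k)) with (S (2 * k)) by lia.
    rewrite mult_INR, (S_INR k); change (INR 2) with 2; field; lra.
Qed.

Lemma is_derive_asin_sq_term' (k : nat) (x : R) :
  is_derive (asin_sq_term' k) x
    (2 * (dfact_ratio k * sin x ^ (2 * k) - dfact_ratio (S k) * sin x ^ (2 * S k))).
Proof.
  pose proof (pos_INR k).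
  unfold asin_sq_term'.
  replace (2 * (dfact_ratio k * sin x ^ (2 * k) - dfact_ratio (S k) * sin x ^ (2 * S k)))
    with (dfact_ratio (S k) / (INR k + 1)
          * (INR (S (2 * k)) * cos x * sin x ^ pred (S (2 * k)) * cos x
             + sin x ^ S (2 * k) * - sin x)).
  - apply is_derive_scal.
    apply (is_derive_mult (K := R_AbsRing) (fun y => sin y ^ S (2 * k)) cos);
      [apply is_derive_pow, is_derive_sin | apply is_derive_cos | intros; apply Rmult_comm].
  - assert (Hpyth : cos x * cos x = 1 - sin x * sin x)
      by (pose proof (sin2_cos2 x); unfold Rsqr in *; lra).
    replace (2 * S k)%nat with (S (S (2 * k))) by lia.
    cbn [pred dfact_ratio pow]; rewrite S_INR, mult_INR; change (INR 2) with 2.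
    set (u := sin x ^ (2 * k)).
    transitivity (dfact_ratio k * (2 * INR k + 2) / (2 * INR k + 1) / (INR k + 1)
                  * ((2 * INR k + 1) * u * (cos x * cos x) - sin x * (sin x * u)));
      [ring | rewrite Hpyth; field; lra].
Qed.

Definition asin_sq_partial (n : nat) (x : R) : R :=
  partial_sum (fun k => asin_sq_term k x) n.

Definition asin_sq_partial' (n : nat) (x : R) : R :=
  partial_sum (fun k => asin_sq_term' k x) n.

Lemma is_derive_asin_sq_partial (n : nat) (x : R) :
  is_derive (asin_sq_partial n) x (asin_sq_partial' n x).
Proof.
  apply is_derive_partial_sum; intros k; apply is_derive_asin_sq_term.
Qed.

Lemma is_derive_asin_sq_partial' (n : nat) (x : R) :
  is_derive (asin_sq_partial' n) x (2 - 2 * (dfact_ratio n * sin x ^ (2 * n))).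
Proof.
  replace (2 - 2 * (dfact_ratio n * sin x ^ (2 * n)))
    with (partial_sum (fun k => 2 * (dfact_ratio k * sin x ^ (2 * k)
                                      - dfact_ratio (S k) * sin x ^ (2 * S k))) n).
  - apply is_derive_partial_sum; intros k; apply is_derive_asin_sq_term'.
  - rewrite partial_sum_scal,
      (partial_sum_telescope (fun k => dfact_ratio k * sin x ^ (2 * k))).
    simpl; ring.
Qed.

Lemma asin_sq_partial_at_0 (n : nat) : asin_sq_partial n 0 = 0 /\ asin_sq_partial' n 0 = 0.
Proof.
  split; apply partial_sum_eq0; intros k;
    unfold asin_sq_term, asin_sq_term'; rewrite sin_0, pow_i by lia; ring.
Qed.

Lemma asin_sq_partial_error (n : nat) (x : R) : 0 <= x <= PI / 4 ->
  0 <= x ^ 2 - asin_sq_partial n x <= dfact_ratio n * (1 / 2) ^ n * x ^ 2.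
Proof.
  intros Hx.
  destruct (asin_sq_partial_at_0 n) as [HF0 HF'0].
  replace (dfact_ratio n * (1 / 2) ^ n * x ^ 2)
    with (2 * dfact_ratio n * (1 / 2) ^ n * x ^ 2 / 2) by field.
  apply (taylor2_bound (fun y => y ^ 2 - asin_sq_partial n y)
           (fun y => 2 * y - asin_sq_partial' n y)
           (fun y => 2 * (dfact_ratio n * sin y ^ (2 * n)))).
  - lra.
  - intros y; apply (is_derive_minus (K := R_AbsRing) (V := R_NormedModule));
      [auto_derive; [auto | ring] | apply is_derive_asin_sq_partial].
  - intros y.
    replace (2 * (dfact_ratio n * sin y ^ (2 * n)))
      with (2 - (2 - 2 * (dfact_ratio n * sin y ^ (2 * n)))) by ring.
    apply (is_derive_minus (K := R_AbsRing) (V := R_NormedModule));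
      [auto_derive; [auto | ring] | apply is_derive_asin_sq_partial'].
  - cbv beta; rewrite HF0; ring.
  - cbv beta; rewrite HF'0; ring.
  - intros y Hy.
    pose proof (dfact_ratio_pos n).
    destruct (sin_sq_le_half y ltac:(lra)) as [Hs0 Hs1].
    rewrite pow_mult.
    assert (0 <= (sin y ^ 2) ^ n <= (1 / 2) ^ n)
      by (split; [apply pow_le | apply pow_incr]; lra).
    nra.
Qed.

Lemma is_lim_seq_asin_sq_partial_PI4 :
  is_lim_seq (fun n => asin_sq_partial n (PI / 4)) ((PI / 4) ^ 2).
Proof.
  pose proof PI_RGT_0.
  apply is_lim_seq_incr_1.
  apply is_lim_seq_le_le with (u := fun n => (PI / 4) ^ 2 - (2 / 3) ^ n * (PI / 4) ^ 2)
                              (w := fun n => (PI / 4) ^ 2).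
  - intros n.
    pose proof (asin_sq_partial_error (S n) (PI / 4) ltac:(lra)).
    pose proof (dfact_ratio_half_pow_le n).
    assert (0 < (PI / 4) ^ 2) by (apply pow_lt; lra).
    nra.
  - replace (Finite ((PI / 4) ^ 2)) with (Finite ((PI / 4) ^ 2 - 0 * (PI / 4) ^ 2))
      by (f_equal; ring).
    apply is_lim_seq_minus', is_lim_seq_mult'; [apply is_lim_seq_const| |apply is_lim_seq_const].
    apply is_lim_seq_geom; rewrite Rabs_pos_eq; lra.
  - apply is_lim_seq_const.
Qed.

Definition cf_weight (k : nat) : R := 2 * asin_sq_term k (PI / 4).

Lemma cf_weight_pos (k : nat) : 0 < cf_weight k.
Proof.
  unfold cf_weight, asin_sq_term; rewrite sin_PI4_pow_even.
  pose proof (dfact_ratio_pos (S k)); pose proof (pos_INR k).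
  pose proof (pow_lt (1 / 2) (S k) ltac:(lra)).
  apply Rmult_lt_0_compat; [lra|].
  apply Rmult_lt_0_compat; [apply Rdiv_lt_0_compat|]; nra.
Qed.

Lemma cf_weight_0 : cf_weight O = 1.
Proof. unfold cf_weight, asin_sq_term; rewrite sin_PI4_pow_even; simpl; field. Qed.

Lemma cf_weight_succ (k : nat) :
  (INR k + 2) * (2 * INR k + 3) * cf_weight (S k) = (INR k + 1) ^ 2 * cf_weight k.
Proof.
  pose proof (pos_INR k).
  unfold cf_weight, asin_sq_term; rewrite !sin_PI4_pow_even.
  cbn [dfact_ratio pow]; rewrite S_INR; field; lra.
Qed.

Lemma is_lim_seq_partial_sum_cf_weight : is_lim_seq (partial_sum cf_weight) (PI ^ 2 / 8).
Proof.
  apply is_lim_seq_ext with (u := fun n => 2 * asin_sq_partial n (PI / 4)).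
  - intros n; unfold asin_sq_partial; rewrite <- partial_sum_scal; reflexivity.
  - replace (PI ^ 2 / 8) with (2 * (PI / 4) ^ 2) by field.
    apply (is_lim_seq_scal_l _ 2 ((PI / 4) ^ 2)), is_lim_seq_asin_sq_partial_PI4.
Qed.

Theorem mainTheorem1 :
  (forall n : nat, cf_B n <> 0) /\
  is_lim_seq (fun n : nat => cf_A n / cf_B n) (8 / PI ^ 2).
Proof.
  pose proof (cf_B_fact_oddfact cf_weight cf_weight_0 cf_weight_succ) as HB.
  assert (Hpos : forall n, 0 < fact_oddfact (S n) /\ 0 < partial_sum cf_weight (S n))
    by (intros n; split; [apply fact_oddfact_pos | apply partial_sum_pos, cf_weight_pos]).
  split.
  - intros n; rewrite HB; destruct (Hpos n); nra.
  - apply is_lim_seq_ext with (u := fun n => / partial_sum cf_weight (S n)).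
    { intros n; rewrite cf_A_fact_oddfact, HB; destruct (Hpos n); field; lra. }
    pose proof PI_RGT_0.
    replace (Finite (8 / PI ^ 2)) with (Rbar_inv (PI ^ 2 / 8))
      by (simpl; f_equal; field; lra).
    apply is_lim_seq_inv.
    + apply (is_lim_seq_incr_1 (partial_sum cf_weight)), is_lim_seq_partial_sum_cf_weight.
    + intros [= Hzero]; nra.
Qed.
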